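(* Let $Q$ be a quantale, $M,N,P$ left $Q$-modules and $f:P\to M$, $g:P\to N$ injective $Q$-module homomorphisms. Let $\vartheta$ be the $Q$-module congruence on $M\times N$ generated by $\{((f(w),\bot_N),(\bot_M,g(w)))\mid w\in P\}$. Then for all $(u,v)\in M\times N$, $(u,v)$ is $\vartheta$-saturated if and only if $\{w\in P\mid f(w)\le u\}=\{w\in P\mid g(w)\le v\}$.
   Context: A quantale is a complete lattice with a monoid product distributing over arbitrary joins; a left $Q$-module is a complete lattice with an associative unital action of $Q$ distributing over joins in each argument; homomorphisms preserve arbitrary joins and the action. $M\times N$ is the $Q$-module with componentwise order and action. For $R\subseteq K^2$ ($K$ a $Q$-module), $s\in K$ is $R$-saturated if for all $(x,y)\in R$ and all $a\in Q$: $ax\le s$ iff $ay\le s$. *)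

From Stdlib Require Import Setoid.

Record quantale := Quantale {
  qcar :> Type;
  qle : qcar -> qcar -> Prop;
  qsup : (qcar -> Prop) -> qcar;
  qmul : qcar -> qcar -> qcar;
  qone : qcar;
  qle_refl : forall x, qle x x;
  qle_antisym : forall x y, qle x y -> qle y x -> x = y;
  qle_trans : forall x y z, qle x y -> qle y z -> qle x z;
  qsup_ub : forall S x, S x -> qle x (qsup S);
  qsup_least : forall S b, (forall x, S x -> qle x b) -> qle (qsup S) b;
  qmulA : forall a b c, qmul a (qmul b c) = qmul (qmul a b) c;
  qmul1l : forall a, qmul qone a = a;
  qmul1r : forall a, qmul a qone = a;
  qmul_supr : forall a S,
    qmul a (qsup S) = qsup (fun y => exists x, S x /\ y = qmul a x);
  qmul_supl : forall S a,
    qmul (qsup S) a = qsup (fun y => exists x, S x /\ y = qmul x a)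
}.

Record qmodule (Q : quantale) := QModule {
  mcar :> Type;
  mle : mcar -> mcar -> Prop;
  msup : (mcar -> Prop) -> mcar;
  act : qcar Q -> mcar -> mcar;
  mle_refl : forall x, mle x x;
  mle_antisym : forall x y, mle x y -> mle y x -> x = y;
  mle_trans : forall x y z, mle x y -> mle y z -> mle x z;
  msup_ub : forall S x, S x -> mle x (msup S);
  msup_least : forall S b, (forall x, S x -> mle x b) -> mle (msup S) b;
  actA : forall a b x, act (qmul Q a b) x = act a (act b x);
  act1 : forall x, act (qone Q) x = x;
  act_supl : forall S x,
    act (qsup Q S) x = msup (fun y => exists a, S a /\ y = act a x);
  act_supr : forall a S,
    act a (msup S) = msup (fun y => exists x, S x /\ y = act a x)
}.

Arguments mle {Q} _ _ _.
Arguments msup {Q} _ _.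
Arguments act {Q} _ _ _.

Definition mbot {Q : quantale} (M : qmodule Q) : M := msup M (fun _ => False).

Definition is_qhom {Q : quantale} (M N : qmodule Q) (f : M -> N) : Prop :=
  (forall S : M -> Prop,
      f (msup M S) = msup N (fun y => exists x, S x /\ y = f x)) /\
  (forall (a : Q) (x : M), f (act M a x) = act N a (f x)).

(** The product module M x N: componentwise order, joins and action.
    We only need its operations. *)
Definition prod_le {Q} (M N : qmodule Q) (p q : M * N) : Prop :=
  mle M (fst p) (fst q) /\ mle N (snd p) (snd q).
Definition prod_sup {Q} (M N : qmodule Q) (S : M * N -> Prop) : M * N :=
  (msup M (fun x => exists y, S (x, y)), msup N (fun y => exists x, S (x, y))).
Definition prod_act {Q} (M N : qmodule Q) (a : Q) (p : M * N) : M * N :=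
  (act M a (fst p), act N a (snd p)).

Section Generic.
Variables (Q : quantale) (K : Type) (le : K -> K -> Prop)
          (sup : (K -> Prop) -> K) (ac : Q -> K -> K).

(** Q-module congruence: equivalence relation compatible with the action and
    with arbitrary joins (if x_i R y_i for all i then \/x_i R \/y_i; the family
    is indexed by a set S of R-related pairs). *)
Definition is_congruence (R : K -> K -> Prop) : Prop :=
  (forall x, R x x) /\
  (forall x y, R x y -> R y x) /\
  (forall x y z, R x y -> R y z -> R x z) /\
  (forall a x y, R x y -> R (ac a x) (ac a y)) /\
  (forall S : K * K -> Prop, (forall p, S p -> R (fst p) (snd p)) ->
     R (sup (fun x => exists y, S (x, y))) (sup (fun y => exists x, S (x, y)))).

Definition gen_congruence (R0 : K -> K -> Prop) : K -> K -> Prop :=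
  fun x y => forall R, is_congruence R -> (forall u v, R0 u v -> R u v) -> R x y.

Definition saturated (R : K -> K -> Prop) (s : K) : Prop :=
  forall x y, R x y -> forall a : Q, le (ac a x) s <-> le (ac a y) s.

End Generic.

(* For fixed s, the relation "a x <= s iff a y <= s, for every scalar a" is
   itself a congruence: it is an equivalence, stable under the action by
   associativity, and stable under joins because a (\/ T) <= s just says that
   a t <= s for all t in T.  Hence s is saturated for a generated congruence
   as soon as it is saturated for the generators.  For a generator
   ((f w, bot), (bot, g w)) that condition reads f (a w) <= u iff g (a w) <= v,
   since f and g commute with the action; taking a = 1 gives the converse. *)

Section SaturationCongruence.
Variables (Q : quantale) (K : Type) (le : K -> K -> Prop)
          (sup : (K -> Prop) -> K) (ac : Q -> K -> K).

Hypothesis ac_mul : forall a b x, ac a (ac b x) = ac (qmul Q a b) x.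

Definition sat_equiv (s x y : K) : Prop :=
  forall a : Q, le (ac a x) s <-> le (ac a y) s.

Variable s : K.

Hypothesis le_ac_sup :
  forall a T, le (ac a (sup T)) s <-> (forall x, T x -> le (ac a x) s).

Lemma sat_equiv_congruence : is_congruence Q K sup ac (sat_equiv s).
Proof.
  unfold sat_equiv; split; [|split; [|split; [|split]]].
  - firstorder.
  - firstorder.
  - intros x y z Hxy Hyz a; rewrite Hxy; apply Hyz.
  - intros b x y Hxy a; rewrite !ac_mul; apply Hxy.
  - intros S HS a; rewrite !le_ac_sup; split.
    + intros H y [x Sxy]; apply (HS _ Sxy); apply H; exists y; exact Sxy.
    + intros H x [y Sxy]; apply (HS _ Sxy); apply H; exists x; exact Sxy.
Qed.

Lemma saturated_gen_congruence (R0 : K -> K -> Prop) :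
  saturated Q K le ac (gen_congruence Q K sup ac R0) s <->
  (forall x y, R0 x y -> sat_equiv s x y).
Proof.
  split.
  - intros Hs x y Rxy a; apply Hs; intros R _ HR; exact (HR _ _ Rxy).
  - intros H0 x y Hxy; exact (Hxy _ sat_equiv_congruence H0).
Qed.

End SaturationCongruence.

Section ModuleFacts.
Variable Q : quantale.

Lemma act_mbot_le (M : qmodule Q) a (x : M) : mle M (act M a (mbot M)) x.
Proof. unfold mbot; rewrite act_supr; apply msup_least; intros y [z [[] _]]. Qed.

Lemma act_msup_le (M : qmodule Q) a (T : M -> Prop) (u : M) :
  mle M (act M a (msup M T)) u <-> (forall x, T x -> mle M (act M a x) u).
Proof.
  rewrite act_supr; split.
  - intros H x Tx; eapply mle_trans; [|exact H]; apply msup_ub; exists x; auto.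
  - intros H; apply msup_least; intros y [x [Tx ->]]; auto.
Qed.

Lemma prod_actA (M N : qmodule Q) a b (z : M * N) :
  prod_act M N a (prod_act M N b z) = prod_act M N (qmul Q a b) z.
Proof. unfold prod_act; simpl; rewrite !actA; reflexivity. Qed.

Lemma prod_act_sup_le (M N : qmodule Q) (s : M * N) a (T : M * N -> Prop) :
  prod_le M N (prod_act M N a (prod_sup M N T)) s <->
  (forall z, T z -> prod_le M N (prod_act M N a z) s).
Proof.
  destruct s as [u v]; unfold prod_le, prod_act, prod_sup; simpl.
  rewrite !act_msup_le; split.
  - intros [Hu Hv] [m n] Tz; split; [apply Hu; exists n | apply Hv; exists m]; exact Tz.
  - intros H; split.
    + intros m [n Tz]; exact (proj1 (H _ Tz)).
    + intros n [m Tz]; exact (proj2 (H _ Tz)).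
Qed.

Lemma sat_equiv_bot_pair (M N : qmodule Q) (u m : M) (v n : N) :
  sat_equiv Q (M * N)%type (prod_le M N) (prod_act M N) (u, v)
    (m, mbot N) (mbot M, n) <->
  (forall a, mle M (act M a m) u <-> mle N (act N a n) v).
Proof.
  unfold sat_equiv, prod_le, prod_act; simpl.
  pose proof (act_mbot_le M) as botM; pose proof (act_mbot_le N) as botN.
  split; intros H a; specialize (H a); firstorder.
Qed.

End ModuleFacts.

Theorem proposition4p4 (Q : quantale) (M N P : qmodule Q)
  (f : P -> M) (g : P -> N)
  (hf : is_qhom P M f) (hg : is_qhom P N g)
  (finj : forall w w', f w = f w' -> w = w')
  (ginj : forall w w', g w = g w' -> w = w') :
  let theta :=
    gen_congruence Q (M * N)%type (prod_sup M N) (prod_act M N)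
      (fun p q => exists w : P, p = (f w, mbot N) /\ q = (mbot M, g w)) in
  forall (u : M) (v : N),
    saturated Q (M * N)%type (prod_le M N) (prod_act M N) theta (u, v) <->
    (forall w : P, mle M (f w) u <-> mle N (g w) v).
Proof.
  intros theta u v; unfold theta.
  rewrite (saturated_gen_congruence _ _ _ _ _
             (prod_actA _ M N) (u, v) (prod_act_sup_le _ M N (u, v))).
  split.
  - intros H w.
    rewrite <- (act1 _ M (f w)), <- (act1 _ N (g w)).
    apply (sat_equiv_bot_pair _ M N), H; exists w; auto.
  - intros H _ _ [w [-> ->]]; apply sat_equiv_bot_pair; intros a.
    rewrite <- (proj2 hf), <- (proj2 hg); apply H.
Qed.
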